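(* Let $(\Omega,\Sigma,\mathbb{P})$ be a probability space and let $X$ be a Banach function space in $L_0(\Sigma)$. Then for every $\sigma(X,X_n^\sim)$-closed cone $C$ in $X$ such that $C\supset -X_+$ and $C\cap X_+=\{0\}$, there exists a strictly positive functional $\phi\in X_n^\sim$ such that $\phi(x)\le 0$ for all $x\in C$.
   Context: $L_0(\Sigma)$ is the vector lattice of real-valued measurable functions modulo a.e. equality with the a.e. order. A Banach function space is an ideal $X$ of $L_0(\Sigma)$ (i.e. $|x|\le|y|$, $y\in X$ imply $x\in X$) endowed with a complete lattice norm. $X_+=\{x\in X:x\ge0\}$. A linear functional on $X$ is order continuous if $\phi(x_\alpha)\to0$ whenever $x_\alpha\to0$ in order (i.e. there is a net $z_\beta\downarrow0$ in $X$ such that for every $\beta$ eventually $|x_\alpha|\le z_\beta$); $X_n^\sim$ is the space of order continuous linear functionals on $X$, and $\sigma(X,X_n^\sim)$ is the weak topology on $X$ induced by $X_n^\sim$. A functional $\phi$ is strictly positive if $\phi(x)>0$ for all $x\ge0$, $x\ne0$. *)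

From HB Require Import structures.
From mathcomp Require Import all_boot all_order all_algebra.
From mathcomp Require Import all_classical all_reals all_analysis.
Set Implicit Arguments. Unset Strict Implicit. Unset Printing Implicit Defensive.
Import Order.TTheory GRing.Theory Num.Theory.
Import numFieldNormedType.Exports.
Local Open Scope classical_set_scope.
Local Open Scope ring_scope.

(* Elements of L_0(Sigma) are represented by measurable functions T -> R;
   all order relations / equalities are taken P-almost everywhere, so that
   everything below only depends on a.e.-classes. *)

Section BFS.
Context {d : measure_display} {T : measurableType d} {R : realType}.
Variable P : probability T R.

Definition ale (f g : T -> R) : Prop := {ae P, forall t, f t <= g t}.
Definition aeq (f g : T -> R) : Prop := {ae P, forall t, f t = g t}.

Definition banach_function_space (X : set (T -> R)) (N : (T -> R) -> R) : Prop :=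
  [/\ (forall x, X x -> measurable_fun setT x),
      X (fun _ => 0) /\
      (forall x y, X x -> X y -> X (fun t => x t + y t)) /\
      (forall (a : R) x, X x -> X (fun t => a * x t)),
      (forall (x y : T -> R), measurable_fun setT x -> X y ->
         ale (fun t => `|x t|) (fun t => `|y t|) -> X x),
      (* norm on the quotient by a.e. equality, lattice norm *)
      (forall x y, X x -> X y -> N (fun t => x t + y t) <= N x + N y) /\
      (forall (a : R) x, X x -> N (fun t => a * x t) = `|a| * N x) /\
      (forall x, X x -> (N x = 0 <-> aeq x (fun _ => 0))) /\
      (forall x y, X x -> X y ->
         ale (fun t => `|x t|) (fun t => `|y t|) -> N x <= N y) &
      (forall u : nat -> T -> R, (forall n, X (u n)) ->
         (forall e : R, 0 < e -> exists n0, forall m n, (n0 <= m)%N -> (n0 <= n)%N ->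
            N (fun t => u m t - u n t) < e) ->
         exists x, X x /\
           (forall e : R, 0 < e -> exists n0, forall n, (n0 <= n)%N ->
              N (fun t => u n t - x t) < e))].

Definition functional_on (X : set (T -> R)) (phi : (T -> R) -> R) : Prop :=
  [/\ (forall x y, X x -> X y -> aeq x y -> phi x = phi y),
      (forall x y, X x -> X y -> phi (fun t => x t + y t) = phi x + phi y) &
      (forall (a : R) x, X x -> phi (fun t => a * x t) = a * phi x)].

Definition directed_set (I : Type) (le : I -> I -> Prop) : Prop :=
  [/\ (exists i : I, True), (forall i, le i i),
      (forall i j k, le i j -> le j k -> le i k) &
      (forall i j, exists k, le i k /\ le j k)].

Definition net_decr_to0 (X : set (T -> R)) (B : Type) (leB : B -> B -> Prop)
    (z : B -> T -> R) : Prop :=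
  [/\ directed_set leB, (forall b, X (z b)),
      (forall b b', leB b b' -> ale (z b') (z b)),
      (forall b, ale (fun _ => 0) (z b)) &
      (forall w, X w -> (forall b, ale w (z b)) -> ale w (fun _ => 0))].

Definition order_conv0 (X : set (T -> R)) (A : Type) (leA : A -> A -> Prop)
    (x : A -> T -> R) : Prop :=
  exists (B : Type) (leB : B -> B -> Prop) (z : B -> T -> R),
    net_decr_to0 X leB z /\
    forall b, exists a0, forall a, leA a0 a -> ale (fun t => `|x a t|) (z b).

(* order continuous functionals on X (elements of X_n^~) *)
Definition order_continuous (X : set (T -> R)) (phi : (T -> R) -> R) : Prop :=
  functional_on X phi /\
  forall (A : Type) (leA : A -> A -> Prop) (x : A -> T -> R),
    directed_set leA -> (forall a, X (x a)) -> order_conv0 X leA x ->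
    forall e : R, 0 < e -> exists a0, forall a, leA a0 a -> `|phi (x a)| < e.

(* C (a subset of X) is closed in the weak topology sigma(X, X_n^~):
   every point of X outside C has a basic weak neighbourhood missing C. *)
Definition weakly_closed (X C : set (T -> R)) : Prop :=
  C `<=` X /\
  forall x, X x -> ~ C x ->
    exists (s : seq ((T -> R) -> R)) (e : R),
      (forall phi, phi \in s -> order_continuous X phi) /\ 0 < e /\
      forall y, X y -> (forall phi, phi \in s -> `|phi y - phi x| < e) -> ~ C y.

Definition is_cone (X C : set (T -> R)) : Prop :=
  C `<=` X /\
  (forall x y, C x -> C y -> C (fun t => x t + y t)) /\
  (forall (a : R) x, 0 <= a -> C x -> C (fun t => a * x t)).

Definition strictly_positive (X : set (T -> R)) (phi : (T -> R) -> R) : Prop :=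
  forall x, X x -> ale (fun _ => 0) x -> ~ aeq x (fun _ => 0) -> 0 < phi x.

End BFS.

From HB Require Import structures.
From mathcomp Require Import all_boot all_order all_algebra.
From mathcomp Require Import all_classical all_reals all_analysis.
From mathcomp Require Import ring lra.
Import Order.TTheory GRing.Theory Num.Theory.
Local Open Scope classical_set_scope.
Local Open Scope ring_scope.
Set Implicit Arguments. Unset Strict Implicit. Unset Printing Implicit Defensive.

(* Every [y] outside [C] is separated from [C] by an order continuous
   functional that is nonpositive on [C]: weak closedness reduces this to
   finitely many functionals, i.e. to Hahn-Banach in R^n. Such functionals are
   positive since [-X_+] lies in [C]. A positive order continuous functional
   annihilates a largest set, the complement of its carrier, and a series
   [sum_n c_n psi_n] with small [c_n > 0] of such functionals is again one,
   annihilating only what every [psi_n] annihilates. Hence among the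
   admissible functionals (order continuous, positive, nonpositive on [C])
   some [f] has a maximal annihilated set [K] of minimal probability. It is
   strictly positive: if [f y = 0] with [y > 0], then [y] lies outside [C]
   and lives on [K]; adding to [f] a functional [psi] separating [y] from [C]
   cannot shrink [K], so [psi] annihilates [K] and [psi y = 0], a
   contradiction. *)

Section FiniteHahnBanach.
Context {R : realType}.

Definition upd (v : nat -> R) (n : nat) (t : R) : nat -> R :=
  fun i => if i == n then t else v i.

Lemma upd_id v n : upd v n (v n) = v.
Proof. by apply: funext => i; rewrite /upd; case: eqP => // ->. Qed.

(* A sublinear functional on R^n, with R^n represented by [nat -> R]: only the
   first [n] coordinates matter. *)
Definition sublinear (n : nat) (q : (nat -> R) -> R) : Prop :=
  [/\ (forall u v, q (fun i => u i + v i) <= q u + q v),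
      (forall (a : R) u, 0 <= a -> q (fun i => a * u i) <= a * q u) &
      (forall u v, (forall i, (i < n)%N -> u i = v i) -> q u = q v)].

Definition dotn (n : nat) (l v : nat -> R) : R := \sum_(i < n) l i * v i.

Lemma sublinear0 n q : sublinear n q -> q (fun _ => 0) = 0.
Proof.
case=> qD qZ _; apply/eqP; rewrite eq_le.
have := qZ 0 (fun _ => 0) (lexx _); have := qD (fun _ => 0) (fun _ => 0).
have -> : (fun i : nat => (0 : R) + 0) = (fun _ => 0) by apply: funext => i; rewrite addr0.
have -> : (fun i : nat => (0 : R) * 0) = (fun _ => 0) by apply: funext => i; rewrite mulr0.
by rewrite mul0r => h ->; rewrite -(lerD2l (q (fun _ => 0))) addr0.
Qed.

Lemma sublinearZ n q (a : R) u : sublinear n q -> 0 < a ->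
  q (fun i => a * u i) = a * q u.
Proof.
case=> _ qZ _ a0; apply/eqP; rewrite eq_le (qZ _ _ (ltW a0)) /=.
have := qZ a^-1 (fun i => a * u i); rewrite invr_ge0 ltW // => /(_ isT).
have -> : (fun i => a^-1 * (a * u i)) = u.
  by apply: funext => i; rewrite mulrA mulVf ?gt_eqF // mul1r.
by rewrite -(ler_pM2l a0) mulrA mulfV ?gt_eqF // mul1r.
Qed.

Lemma sublinear_upd_convex m q v n (s a u : R) : sublinear m q -> s < a -> a < u ->
  (u - s) * q (upd v n a) <= (u - a) * q (upd v n s) + (a - s) * q (upd v n u).
Proof.
move=> sq sa au; have [qD qZ _] := sq.
have -> : u - s = u - a + (a - s) by ring.
rewrite -(sublinearZ _ sq); last by rewrite addr_gt0 // subr_gt0.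
have -> : (fun i => (u - a + (a - s)) * upd v n a i) =
    (fun i => (u - a) * upd v n s i + (a - s) * upd v n u i).
  by apply: funext => i; rewrite /upd; case: eqP => _; ring.
apply: le_trans (qD _ _) _.
by rewrite lerD // qZ // subr_ge0 ltW.
Qed.

(* The supremum of the left difference quotients of [g] at [a] is a slope
   of a supporting line. *)
Lemma convex_subgradient (g : R -> R) (a : R) :
  (forall s u, s < a -> a < u -> (u - s) * g a <= (u - a) * g s + (a - s) * g u) ->
  exists c, forall t, g a + c * (t - a) <= g t.
Proof.
move=> cvx.
have slope_le s u : s < a -> a < u -> (g a - g s) / (a - s) <= (g u - g a) / (u - a).
  move=> sa au; have := cvx s u sa au.
  rewrite ler_pdivrMr ?subr_gt0 // mulrAC ler_pdivlMr ?subr_gt0 //; lra.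
pose L := [set (g a - g s) / (a - s) | s in [set s | s < a]].
have L0 : L !=set0.
  by exists ((g a - g (a - 1)) / (a - (a - 1))), (a - 1) => //=; rewrite ltrBlDr ltrDl.
have Lub u : a < u -> ubound L ((g u - g a) / (u - a)).
  by move=> au _ [s /= sa <-]; apply: slope_le.
have hL : has_ubound L by exists ((g (a + 1) - g a) / (a + 1 - a)); apply: Lub; rewrite ltrDl.
exists (sup L) => t; case: (ltgtP t a) => [ta|ta|->]; last by rewrite subrr mulr0 addr0.
- have : (g a - g t) / (a - t) <= sup L by apply: ub_le_sup => //; exists t.
  rewrite ler_pdivrMr ?subr_gt0 //; nra.
- have : sup L <= (g t - g a) / (t - a) by apply: ge_sup => //; apply: Lub.
  rewrite ler_pdivlMr ?subr_gt0 //; nra.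
Qed.

Definition slice_inf (q : (nat -> R) -> R) (n : nat) (c : R) (v : nat -> R) : R :=
  inf [set q (upd v n t) - c * t | t in [set: R]].

Section SliceInf.
Variables (n : nat) (q : (nat -> R) -> R) (p : nat -> R) (c : R).
Hypotheses (sq : sublinear n.+1 q) (hc : forall t, q p + c * (t - p n) <= q (upd p n t)).

Let slice_bounded v : has_lbound [set q (upd v n t) - c * t | t in [set: R]].
Proof.
have [qD _ _] := sq.
exists (q p - c * p n - q (fun i => upd p n 0 i - upd v n 0 i)) => _ [t _ <-].
have : q (upd p n t) <= q (upd v n t) + q (fun i => upd p n 0 i - upd v n 0 i).
  have -> : upd p n t = (fun i => upd v n t i + (upd p n 0 i - upd v n 0 i)).
    by apply: funext => i; rewrite /upd; case: eqP => _; ring.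
  exact: qD.
have := hc t; lra.
Qed.

Lemma slice_inf_le v t : slice_inf q n c v <= q (upd v n t) - c * t.
Proof. by apply: ge_inf; [exact: slice_bounded | exists t]. Qed.

Lemma slice_inf_ge v b : (forall t, b <= q (upd v n t) - c * t) -> b <= slice_inf q n c v.
Proof.
move=> h; apply: lb_le_inf => [|_ [t _ <-]]; last exact: h.
by exists (q (upd v n 0) - c * 0), 0.
Qed.

Lemma slice_inf_sublinear : sublinear n (slice_inf q n c).
Proof.
have [qD qZ qL] := sq; split.
- move=> u v; rewrite -lerBlDr; apply: slice_inf_ge => t1.
  rewrite lerBlDr addrC -lerBlDr; apply: slice_inf_ge => t2; rewrite lerBlDr.
  apply: le_trans (slice_inf_le _ (t1 + t2)) _.
  have : q (upd (fun i => u i + v i) n (t1 + t2)) <= q (upd u n t1) + q (upd v n t2).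
    have -> : upd (fun i => u i + v i) n (t1 + t2) = (fun i => upd u n t1 i + upd v n t2 i).
      by apply: funext => i; rewrite /upd; case: eqP.
    exact: qD.
  lra.
- move=> a u; rewrite le_eqVlt => /orP [/eqP <-|a0].
    rewrite mul0r; apply: le_trans (slice_inf_le _ 0) _.
    have -> : upd (fun i => 0 * u i) n 0 = (fun _ => 0).
      by apply: funext => i; rewrite /upd; case: eqP; rewrite ?mul0r.
    by rewrite (sublinear0 sq) mulr0 subr0.
  rewrite mulrC -ler_pdivrMr //; apply: slice_inf_ge => t; rewrite ler_pdivrMr //.
  apply: le_trans (slice_inf_le _ (a * t)) _.
  have -> : upd (fun i => a * u i) n (a * t) = (fun i => a * upd u n t i).
    by apply: funext => i; rewrite /upd; case: eqP.
  by rewrite (sublinearZ _ sq) // [X in _ <= X]mulrC mulrBr mulrCA.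
- move=> u v huv; congr inf; congr image; apply: funext => t.
  congr (_ - _); apply: qL => i ilt; rewrite /upd; case: eqP => // /eqP ineq.
  by apply: huv; rewrite ltn_neqAle ineq -ltnS.
Qed.

Lemma slice_inf_dominated v : slice_inf q n c v + c * v n <= q v.
Proof. by rewrite -lerBrDr -[X in _ <= q X - _](upd_id v n) slice_inf_le. Qed.

Lemma slice_inf_at : slice_inf q n c p = q p - c * p n.
Proof.
apply/eqP; rewrite eq_le; apply/andP; split.
  by rewrite -[X in _ <= q X - _](upd_id p n) slice_inf_le.
by apply: slice_inf_ge => t; have := hc t; lra.
Qed.

End SliceInf.

(* Induction on [n]: a subgradient [c] of [t |-> q (upd p n t)] at [p n] is the
   last coordinate, and [slice_inf q n c] is the functional for the others. *)
Theorem finite_hahn_banach n q p : sublinear n q ->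
  exists l, (forall v, dotn n l v <= q v) /\ dotn n l p = q p.
Proof.
elim: n q => [|n IH] q sq.
  have q0 v : q v = 0 by have [_ _ qL] := sq; rewrite (qL v (fun _ => 0)) ?(sublinear0 sq).
  by exists (fun _ => 0); split => [v|]; rewrite /dotn big_ord0 q0.
have [c hc] := convex_subgradient (fun s u => @sublinear_upd_convex _ _ p n s (p n) u sq).
rewrite /= upd_id in hc.
have [l [hl hlp]] := IH _ (slice_inf_sublinear sq hc).
have dotS v : dotn n.+1 (upd l n c) v = dotn n l v + c * v n.
  rewrite /dotn big_ord_recr /= /upd eqxx; congr (_ + _).
  by apply: eq_bigr => i _; rewrite ifN // neq_ltn ltn_ord.
exists (upd l n c); split => [v|].
  by rewrite dotS; apply: le_trans (slice_inf_dominated sq hc v); rewrite lerD2r.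
by rewrite dotS hlp (slice_inf_at sq hc) subrK.
Qed.

Definition maxnorm (n : nat) (v : nat -> R) : R := \big[Order.max/0]_(i < n) `|v i|.

Lemma maxnorm_ge0 n v : 0 <= maxnorm n v.
Proof. exact: bigmax_ge_id. Qed.

Lemma ler_maxnorm n v i : (i < n)%N -> `|v i| <= maxnorm n v.
Proof. by move=> ilt; have := le_bigmax 0 (fun j : 'I_n => `|v j|) (Ordinal ilt). Qed.

Lemma maxnorm_le n v b : 0 <= b -> (forall i, (i < n)%N -> `|v i| <= b) -> maxnorm n v <= b.
Proof. by move=> b0 h; apply: bigmax_le => // i _; apply: h. Qed.

Lemma maxnorm_sublinear n : sublinear n (maxnorm n).
Proof.
split.
- move=> u v; apply: maxnorm_le => [|i ilt]; first by rewrite addr_ge0 ?maxnorm_ge0.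
  by apply: le_trans (ler_normD _ _) _; rewrite lerD ?ler_maxnorm.
- move=> a u a0; apply: maxnorm_le => [|i ilt]; first by rewrite mulr_ge0 ?maxnorm_ge0.
  by rewrite normrM ger0_norm // ler_wpM2l // ler_maxnorm.
- by move=> u v huv; apply: eq_bigr => i _; rewrite huv.
Qed.

(* Hahn-Banach applied to the distance to the cone. *)
Lemma cone_separation n (D : set (nat -> R)) p e : 0 < e -> D (fun _ => 0) ->
  (forall u v, D u -> D v -> D (fun i => u i + v i)) ->
  (forall a u, 0 <= a -> D u -> D (fun i => a * u i)) ->
  (forall u, D u -> e <= maxnorm n (fun i => p i - u i)) ->
  exists l, (forall u, D u -> dotn n l u <= 0) /\ 0 < dotn n l p.
Proof.
move=> e0 D0 DD DZ far; have [mD mZ mL] := maxnorm_sublinear n.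
pose dist v := inf [set maxnorm n (fun i => v i - u i) | u in D].
have dist_le v u : D u -> dist v <= maxnorm n (fun i => v i - u i).
  by move=> Du; apply: ge_inf; [exists 0 => _ [w _ <-]; exact: maxnorm_ge0 | exists u].
have dist_ge v b : (forall u, D u -> b <= maxnorm n (fun i => v i - u i)) -> b <= dist v.
  move=> h; apply: lb_le_inf => [|_ [u Du <-]]; last exact: h.
  by exists (maxnorm n (fun i => v i - 0)), (fun _ => 0).
have dist_sublinear : sublinear n dist.
  split.
  - move=> v w; rewrite -lerBlDr; apply: (dist_ge) => u1 Du1.
    rewrite lerBlDr addrC -lerBlDr; apply: (dist_ge) => u2 Du2; rewrite lerBlDr.
    apply: le_trans (dist_le _ _ (DD _ _ Du1 Du2)) _; rewrite addrC.
    rewrite (mL _ (fun i => (v i - u1 i) + (w i - u2 i))) => [|i _]; last by ring.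
    exact: mD.
  - move=> a v; rewrite le_eqVlt => /orP [/eqP <-|a0].
      rewrite mul0r; apply: le_trans (dist_le _ _ D0) _.
      by apply: maxnorm_le => // i _; rewrite mul0r subr0 normr0.
    rewrite mulrC -ler_pdivrMr //; apply: (dist_ge) => u Du; rewrite ler_pdivrMr //.
    apply: le_trans (dist_le _ _ (DZ _ _ (ltW a0) Du)) _.
    rewrite (mL _ (fun i => a * (v i - u i))) => [|i _]; last by ring.
    by rewrite mulrC mZ // ltW.
  - by move=> v w hvw; congr inf; congr image; apply: funext => u; apply: mL => i /hvw ->.
have [l [hl hlp]] := finite_hahn_banach p dist_sublinear.
exists l; split => [u Du|].
  apply: le_trans (hl u) _; apply: le_trans (dist_le u u Du) _.
  by apply: maxnorm_le => // i _; rewrite subrr normr0.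
by rewrite hlp; apply: lt_le_trans e0 _; apply: dist_ge.
Qed.

End FiniteHahnBanach.

Section Dyadic.
Context {R : realType}.

Definition pow2inv (k : nat) : R := (2 ^+ k)^-1.

Lemma pow2inv_gt0 k : 0 < pow2inv k.
Proof. by rewrite invr_gt0 exprn_gt0. Qed.

Lemma pow2inv_ge0 k : 0 <= pow2inv k.
Proof. exact/ltW/pow2inv_gt0. Qed.

Lemma pow2invS k : pow2inv k.+1 = pow2inv k / 2.
Proof. by rewrite /pow2inv exprS invfM mulrC. Qed.

Lemma pow2inv_le k l : (k <= l)%N -> pow2inv l <= pow2inv k.
Proof.
by move=> kl; rewrite lef_pV2 ?posrE ?exprn_gt0 // ler_eXn2l // ltr1n.
Qed.

Lemma pow2inv_small (K e : R) : 0 < e -> exists k, K * pow2inv k < e.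
Proof.
move=> e0; case: (leP K 0) => K0.
  by exists 0%N; apply: le_lt_trans e0; rewrite mulr_le0_ge0 // pow2inv_ge0.
have hb := archi_boundP (ltW (divr_gt0 K0 e0)); set B := Num.Def.archi_bound _ in hb.
exists B; rewrite ltr_pdivrMr ?exprn_gt0 // -ltr_pdivrMl // mulrC.
apply: lt_le_trans hb _; rewrite -natrX ler_nat; exact/ltnW/ltn_expl.
Qed.

Lemma ler_add_pow2inv (a b K : R) : (forall k, a <= b + K * pow2inv k) -> a <= b.
Proof.
move=> h; rewrite leNgt; apply/negP; rewrite -subr_gt0 => /(pow2inv_small K) [k].
by rewrite ltrBrDl ltNge h.
Qed.

(* The limit of a sequence with increments bounded by [K 2^-k]; the sequence
   [S m - 2 K 2^-m] increases to it. *)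
Definition dyadic_lim (S : nat -> R) (K : R) : R :=
  sup [set S m - 2 * K * pow2inv m | m in [set: nat]].

Lemma dyadic_limP S K : 0 <= K -> (forall k, `|S k.+1 - S k| <= K * pow2inv k) ->
  forall l, `|dyadic_lim S K - S l| <= 2 * K * pow2inv l.
Proof.
move=> K0 hS.
have S_cauchy l m : (l <= m)%N -> `|S m - S l| <= 2 * K * (pow2inv l - pow2inv m).
  move=> /subnKC <-; elim: (m - l)%N => [|k IH]; first by rewrite addn0 !subrr normr0 mulr0.
  have -> : S (l + k.+1)%N - S l = (S (l + k).+1 - S (l + k)%N) + (S (l + k)%N - S l).
    by rewrite addnS addrA subrK.
  apply: le_trans (ler_normD _ _) _; rewrite addnS; apply: le_trans (lerD (hS _) IH) _.
  by rewrite pow2invS; lra.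
pose V m := S m - 2 * K * pow2inv m.
have V_ub l m : V m <= S l + 2 * K * pow2inv l.
  have := pow2inv_ge0 l; have := pow2inv_ge0 m; rewrite /V.
  case: (leqP l m) => [lm|/ltnW ml].
    by have := le_trans (ler_norm _) (S_cauchy _ _ lm); nra.
  by have := S_cauchy _ _ ml; rewrite distrC => /(le_trans (ler_norm _)); nra.
have V0 : [set V m | m in [set: nat]] !=set0 by exists (V 0%N), 0%N.
have V_bounded : has_ubound [set V m | m in [set: nat]].
  by exists (S 0%N + 2 * K * pow2inv 0) => _ [m _ <-]; apply: V_ub.
move=> l; rewrite ler_norml; apply/andP; split.
  suff : V l <= dyadic_lim S K by rewrite /V; lra.
  by apply: ub_le_sup => //; exists l.
suff : dyadic_lim S K <= S l + 2 * K * pow2inv l by lra.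
by apply: ge_sup => // _ [m _ <-]; apply: V_ub.
Qed.

End Dyadic.

Section RealProbability.
Context {d : measure_display} {T : measurableType d} {R : realType}.
Variable P : probability T R.

Definition prob (A : set T) : R := fine (P A).

Lemma probE A : measurable A -> P A = (prob A)%:E.
Proof. by move=> mA; rewrite /prob fineK // fin_num_measure. Qed.

Lemma prob_ge0 A : 0 <= prob A.
Proof. exact: fine_ge0 (measure_ge0 _ _). Qed.

Lemma prob_le1 A : measurable A -> prob A <= 1.
Proof.
move=> mA; rewrite -lee_fin -probE // -(probability_setT P).
by apply: le_measure; rewrite ?inE.
Qed.

Lemma le_prob A B : measurable A -> measurable B -> A `<=` B -> prob A <= prob B.
Proof. by move=> mA mB AB; rewrite -lee_fin -!probE //; apply: le_measure; rewrite ?inE. Qed.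

Lemma probU A B : measurable A -> measurable B -> A `&` B = set0 ->
  prob (A `|` B) = prob A + prob B.
Proof.
move=> mA mB AB; apply/eqP; rewrite -(@eqe R) EFinD -!probE //; last exact: measurableU.
by rewrite measureU.
Qed.

Lemma probID A B : measurable A -> measurable B -> prob A = prob (A `&` B) + prob (A `\` B).
Proof.
move=> mA mB; rewrite -probU ?setUIDK //; [exact: measurableI|exact: measurableD|].
by apply/seteqP; split => t // [[_ ?] [_ ?]].
Qed.

Lemma prob_eq0 A : measurable A -> prob A = 0 -> P A = 0.
Proof. by move=> mA h; rewrite probE // h. Qed.

Lemma negligible_ae (A : set T) (Q : T -> Prop) : measurable A -> P A = 0 ->
  (forall t, ~ A t -> Q t) -> {ae P, forall t, Q t}.
Proof.
move=> mA PA h; exists A; split => // t /= nQ; apply: contrapT => nA; apply: nQ; exact: h.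
Qed.

Lemma null_setD_of_prob_le A B : measurable A -> measurable B -> P (B `\` A) = 0 ->
  prob A <= prob B -> P (A `\` B) = 0.
Proof.
move=> mA mB BA AB; apply: prob_eq0; first exact: measurableD.
have := probID mA mB; have := probID mB mA; rewrite setIC.
have : prob (B `\` A) = 0 by rewrite /prob BA.
have := prob_ge0 (A `\` B); lra.
Qed.

Lemma prob_le_of_null_setD A B : measurable A -> measurable B -> P (A `\` B) = 0 ->
  prob A <= prob B.
Proof.
move=> mA mB AB; rewrite (probID mA mB) /prob AB addr0.
by apply: le_prob; [exact: measurableI | | exact: subIsetr].
Qed.

End RealProbability.

Section BanachFunctionSpace.
Context {d : measure_display} {T : measurableType d} {R : realType}.
Variables (P : probability T R) (X : set (T -> R)) (N : (T -> R) -> R).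
Hypothesis hX : banach_function_space P X N.

Lemma bfs_measurable x : X x -> measurable_fun setT x.
Proof. by case: hX => h *; apply: h. Qed.

Lemma bfs0 : X (fun _ => 0).
Proof. by case: hX => _ []. Qed.

Lemma bfsD x y : X x -> X y -> X (fun t => x t + y t).
Proof. by case: hX => _ [_ [h _]] *; apply: h. Qed.

Lemma bfsZ (a : R) x : X x -> X (fun t => a * x t).
Proof. by case: hX => _ [_ [_ h]] *; apply: h. Qed.

Lemma bfsN x : X x -> X (fun t => - x t).
Proof. by move=> /(bfsZ (-1)); under eq_fun do rewrite mulN1r. Qed.

Lemma bfsB x y : X x -> X y -> X (fun t => x t - y t).
Proof. by move=> hx /bfsN; apply: bfsD. Qed.

Lemma bfs_ideal (x y : T -> R) : measurable_fun setT x -> X y ->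
  ale P (fun t => `|x t|) (fun t => `|y t|) -> X x.
Proof. by case: hX => _ _ h *; apply: (h x y). Qed.

Lemma bfs_abs x : X x -> X (fun t => `|x t|).
Proof.
move=> hx; apply: (bfs_ideal _ hx); last by apply: aeW => t; rewrite normr_id.
exact: measurableT_comp (@measurable_realfun.normr_measurable R setT) (bfs_measurable hx).
Qed.

Lemma bfs_sum (u : nat -> T -> R) (c : nat -> R) m : (forall k, X (u k)) ->
  X (fun t => \sum_(k < m) c k * u k t).
Proof.
move=> hu; elim: m => [|m IH]; first by under eq_fun do rewrite big_ord0; exact: bfs0.
by under eq_fun do rewrite big_ord_recr /=; apply: bfsD => //; apply: bfsZ.
Qed.

Lemma bnormD x y : X x -> X y -> N (fun t => x t + y t) <= N x + N y.
Proof. by case: hX => _ _ _ [h _] _; apply: h. Qed.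

Lemma bnormZ (a : R) x : X x -> N (fun t => a * x t) = `|a| * N x.
Proof. by case: hX => _ _ _ [_ [h _]] _; apply: h. Qed.

Lemma bnorm_eq0 x : X x -> N x = 0 <-> aeq P x (fun _ => 0).
Proof. by case: hX => _ _ _ [_ [_ [h _]]] _; apply: h. Qed.

Lemma bnorm_le x y : X x -> X y -> ale P (fun t => `|x t|) (fun t => `|y t|) -> N x <= N y.
Proof. by case: hX => _ _ _ [_ [_ [_ h]]] _; apply: h. Qed.

Lemma bnorm0 : N (fun _ => 0) = 0.
Proof. by apply/(bnorm_eq0 bfs0)/aeW. Qed.

Lemma bnorm_ge0 x : X x -> 0 <= N x.
Proof.
move=> hx; have := bnormD hx (bfsZ (-1) hx).
have -> : (fun t => x t + -1 * x t) = (fun _ => 0) by apply: funext => t; lra.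
by rewrite bnorm0 bnormZ // normrN normr1 mul1r; lra.
Qed.

Lemma bnorm_ae x y : X x -> X y -> aeq P x y -> N x = N y.
Proof.
by move=> hx hy hxy; apply/eqP; rewrite eq_le !bnorm_le //; apply: filterS hxy => t ->.
Qed.

Lemma bnormB_sym x y : X x -> X y -> N (fun t => x t - y t) = N (fun t => y t - x t).
Proof.
move=> hx hy; rewrite -[RHS]mul1r -normr1 -(normrN 1) -bnormZ; last exact: bfsB.
by congr N; apply: funext => t; ring.
Qed.

Section LinearFunctional.
Variable phi : (T -> R) -> R.
Hypothesis fphi : functional_on P X phi.

Lemma linD x y : X x -> X y -> phi (fun t => x t + y t) = phi x + phi y.
Proof. by case: fphi => _ h _; apply: h. Qed.

Lemma linZ (a : R) x : X x -> phi (fun t => a * x t) = a * phi x.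
Proof. by case: fphi => _ _ h; apply: h. Qed.

Lemma lin_ae x y : X x -> X y -> aeq P x y -> phi x = phi y.
Proof. by case: fphi => h _ _; apply: h. Qed.

Lemma lin0 : phi (fun _ => 0) = 0.
Proof. by have := linZ 0 bfs0; under eq_fun do rewrite mul0r; rewrite mul0r. Qed.

Lemma linN x : X x -> phi (fun t => - x t) = - phi x.
Proof. by move=> /(linZ (-1)); under eq_fun do rewrite mulN1r; rewrite mulN1r. Qed.

Lemma linB x y : X x -> X y -> phi (fun t => x t - y t) = phi x - phi y.
Proof. by move=> hx hy; rewrite linD ?linN //; apply: bfsN. Qed.

Lemma lin_sum (u : nat -> T -> R) (c : nat -> R) m : (forall k, X (u k)) ->
  phi (fun t => \sum_(k < m) c k * u k t) = \sum_(k < m) c k * phi (u k).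
Proof.
move=> hu; elim: m => [|m IH].
  by under eq_fun do rewrite big_ord0; rewrite big_ord0 lin0.
under eq_fun do rewrite big_ord_recr /=.
by rewrite linD ?linZ ?IH ?big_ord_recr //; [exact: bfs_sum | exact: bfsZ].
Qed.

Definition positive_functional := forall y, X y -> ale P (fun _ => 0) y -> 0 <= phi y.

Hypothesis pphi : positive_functional.

Lemma positive_le y z : X y -> X z -> ale P y z -> phi y <= phi z.
Proof.
move=> hy hz hyz; rewrite -subr_ge0 -linB //; apply: pphi; first exact: bfsB.
by apply: filterS hyz => t; rewrite subr_ge0.
Qed.

Lemma positive_abs y : X y -> `|phi y| <= phi (fun t => `|y t|).
Proof.
move=> hy; have hay := bfs_abs hy.
rewrite ler_norml -linN //; apply/andP; split; apply: positive_le => //.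
- exact: bfsN.
- by apply: aeW => t; rewrite lerNl -normrN ler_norm.
- by apply: aeW => t; rewrite ler_norm.
Qed.

End LinearFunctional.

Lemma bfs_complete (u : nat -> T -> R) : (forall n, X (u n)) ->
  (forall e : R, 0 < e -> exists n0, forall m n, (n0 <= m)%N -> (n0 <= n)%N ->
     N (fun t => u m t - u n t) < e) ->
  exists x, X x /\ (forall e : R, 0 < e -> exists n0, forall n, (n0 <= n)%N ->
     N (fun t => u n t - x t) < e).
Proof. by case: hX => _ _ _ _; apply. Qed.

Lemma bfs_increasing_limit_ge (s : nat -> T -> R) x :
  (forall m, X (s m)) -> X x -> (forall m t, s m t <= s m.+1 t) ->
  (forall e : R, 0 < e -> exists n0, forall n, (n0 <= n)%N -> N (fun t => s n t - x t) < e) ->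
  forall m, ale P (s m) x.
Proof.
move=> hs hx s_incr s_cvg m; pose v t := Num.max (s m t - x t) 0.
have s_mono t : {homo s^~ t : i j / (i <= j)%N >-> i <= j}.
  exact/nondecreasing_seqP.
have v_le M t : (m <= M)%N -> `|v t| <= `|s M t - x t|.
  move=> mM; rewrite ger0_norm ?le_max ?lexx ?orbT // ge_max normr_ge0 andbT.
  by apply: le_trans (ler_norm _); rewrite lerD2r s_mono.
have hv : X v.
  apply: (bfs_ideal _ (bfsB (hs m) hx)); last by apply: aeW => t; exact: v_le.
  exact: measurable_realfun.measurable_maxr (bfs_measurable (bfsB (hs m) hx))
    (measurable_cst (0 : R)).
have Nv : N v = 0.
  apply/eqP; rewrite eq_le bnorm_ge0 // andbT.
  apply: (ler_add_pow2inv (b := 0) (K := 1)) => k; rewrite add0r mul1r.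
  have [n0 hn0] := s_cvg _ (pow2inv_gt0 k).
  apply: le_trans (ltW (hn0 (maxn n0 m) (leq_maxl _ _))).
  by apply: bnorm_le => //; [exact: bfsB | apply: aeW => t; apply: v_le; exact: leq_maxr].
have := (bnorm_eq0 hv).1 Nv; apply: filterS => t; rewrite /v => /eqP.
by rewrite eq_le ge_max lexx andbT subr_le0 => /andP [].
Qed.

Lemma bfs_series_ub (u : nat -> T -> R) : (forall k, X (u k)) ->
  (forall k t, 0 <= u k t) -> (forall k, N (u k) <= 1) ->
  exists x, X x /\ forall m, ale P (fun t => \sum_(k < m) pow2inv k * u k t) x.
Proof.
move=> hu u0 Nu; pose s m t := \sum_(k < m) pow2inv k * u k t.
have hs m : X (s m) by exact: bfs_sum.
have s_incr m t : s m t <= s m.+1 t.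
  by rewrite /s big_ord_recr lerDl mulr_ge0 ?pow2inv_ge0.
have s_cauchy l m : (l <= m)%N -> N (fun t => s m t - s l t) <= 2 * pow2inv l.
  move=> lm; apply: le_trans (_ : 2 * (pow2inv l - pow2inv m) <= _); last first.
    by rewrite ler_pM2l // lerBlDr lerDl pow2inv_ge0.
  move: lm => /subnKC <-; elim: (m - l)%N => [|k IH].
    by under eq_fun do rewrite addn0 subrr; rewrite bnorm0 addn0 subrr mulr0.
  have -> : (fun t => s (l + k.+1)%N t - s l t) =
      (fun t => (s (l + k)%N t - s l t) + pow2inv (l + k) * u (l + k)%N t).
    by apply: funext => t; rewrite addnS /s big_ord_recr /=; ring.
  apply: le_trans (bnormD (bfsB (hs _) (hs _)) (bfsZ _ (hu _))) _.
  rewrite bnormZ // ger0_norm ?pow2inv_ge0 // addnS pow2invS.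
  by have := ler_wpM2l (pow2inv_ge0 (l + k)) (Nu (l + k)%N); rewrite mulr1; lra.
have [x [hx s_cvg]] : exists x, X x /\ (forall e : R, 0 < e ->
    exists n0, forall n, (n0 <= n)%N -> N (fun t => s n t - x t) < e).
  apply: bfs_complete => // e e0; have [n0 hn0] := pow2inv_small 2 e0.
  exists n0 => m n hm hn; apply: le_lt_trans hn0.
  case: (leqP n m) => [nm|/ltnW mn]; last rewrite bnormB_sym //.
    by apply: le_trans (s_cauchy _ _ nm) _; rewrite ler_pM2l // pow2inv_le.
  by apply: le_trans (s_cauchy _ _ mn) _; rewrite ler_pM2l // pow2inv_le.
by exists x; split => //; apply: bfs_increasing_limit_ge.
Qed.

Lemma positive_unbounded_seq phi : functional_on P X phi -> positive_functional phi ->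
  ~ (exists M, 0 <= M /\ forall y, X y -> `|phi y| <= M * N y) ->
  exists u : nat -> T -> R, [/\ forall k, X (u k), forall k t, 0 <= u k t,
    forall k, N (u k) <= 1 & forall k, 2 ^+ k <= phi (u k)].
Proof.
move=> fphi pphi unbounded.
have /choice [y hy] : forall k : nat, exists y, X y /\ 2 ^+ k * N y < `|phi y|.
  move=> k; apply: contrapT => hk; apply: unbounded; exists (2 ^+ k).
  split => [|y hy]; first exact: exprn_ge0.
  by rewrite leNgt; apply/negP => hlt; apply: hk; exists y.
have Xy k : X (y k) by case: (hy k).
have Ny_gt0 k : 0 < N (y k).
  rewrite lt_neqAle bnorm_ge0 // andbT; apply/negP => /eqP /esym /(bnorm_eq0 (Xy k)) y0.
  have [_] := hy k; rewrite (lin_ae fphi (Xy k) bfs0 y0) (lin0 fphi) normr0.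
  by rewrite ltNge mulr_ge0 ?exprn_ge0 ?bnorm_ge0.
exists (fun k t => (N (y k))^-1 * `|y k t|); split => [k|k t|k|k].
- exact/bfsZ/bfs_abs.
- by rewrite mulr_ge0 ?invr_ge0 ?bnorm_ge0.
- have hay := bfs_abs (Xy k).
  have : N (fun t => `|y k t|) <= N (y k).
    by apply: bnorm_le => //; apply: aeW => t; rewrite normr_id.
  rewrite bnormZ // (@ger0_norm _ (N (y k))^-1) ?invr_ge0 ?bnorm_ge0 //.
  by rewrite mulrC ler_pdivrMr // mul1r.
- rewrite (linZ fphi); last exact: bfs_abs.
  apply: le_trans (_ : (N (y k))^-1 * `|phi (y k)| <= _); last first.
    by rewrite ler_wpM2l ?invr_ge0 ?bnorm_ge0 // positive_abs.
  by rewrite mulrC ler_pdivlMr //; case: (hy k) => _ /ltW.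
Qed.

(* Otherwise [phi] would be infinite at an upper bound of [sum_k 2^-k u_k],
   where [N (u k) <= 1] and [phi (u k) >= 2^k]. *)
Lemma positive_bounded phi : functional_on P X phi -> positive_functional phi ->
  exists M, 0 <= M /\ forall y, X y -> `|phi y| <= M * N y.
Proof.
move=> fphi pphi; apply: contrapT => /(positive_unbounded_seq fphi pphi).
move=> [u [hu u_ge0 Nu phiu]]; have [x [hx sum_le]] := bfs_series_ub hu u_ge0 Nu.
have phix m : m%:R <= phi x.
  apply: le_trans (positive_le fphi pphi (bfs_sum _ _ hu) hx (sum_le m)).
  rewrite (lin_sum fphi) // -[m in m%:R]card_ord -sumr_const; apply: ler_sum => k _.
  have two_k : (2 : R) ^+ k != 0 by rewrite expf_neq0 // pnatr_eq0.
  by rewrite -(mulVf two_k) ler_wpM2l ?pow2inv_ge0.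
have := archi_boundP (normr_ge0 (phi x)); set B := Num.Def.archi_bound _ => hB.
by have := phix B; rewrite leNgt => /negP; apply; exact: le_lt_trans (ler_norm _) hB.
Qed.

Lemma order_continuous0 : order_continuous P X (fun _ => 0).
Proof.
split; first by split => *; rewrite ?mulr0 ?addr0.
by move=> A leA x [[i _] _ _ _] _ _ e e0; exists i => a _; rewrite normr0.
Qed.

Lemma order_continuousD f g : order_continuous P X f -> order_continuous P X g ->
  order_continuous P X (fun y => f y + g y).
Proof.
move=> [ff hf] [fg hg]; split.
  split.
  - by move=> x y hx hy e; rewrite (lin_ae ff hx hy e) (lin_ae fg hx hy e).
  - by move=> x y hx hy; rewrite (linD ff) // (linD fg) //; ring.
  - by move=> a x hx; rewrite (linZ ff) // (linZ fg) //; ring.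
move=> A leA x dA hx hc e e0; have e2 : 0 < e / 2 by rewrite divr_gt0.
have [a1 h1] := hf A leA x dA hx hc _ e2; have [a2 h2] := hg A leA x dA hx hc _ e2.
case: dA => _ _ tr dir; have [k [k1 k2]] := dir a1 a2.
exists k => a ka; apply: le_lt_trans (ler_normD _ _) _.
by rewrite (splitr e) ltrD ?h1 ?h2 //; apply: tr ka.
Qed.

Lemma order_continuousZ (c : R) f : order_continuous P X f ->
  order_continuous P X (fun y => c * f y).
Proof.
move=> [ff hf]; split.
  split.
  - by move=> x y hx hy e; rewrite (lin_ae ff hx hy e).
  - by move=> x y hx hy; rewrite (linD ff) //; ring.
  - by move=> a x hx; rewrite (linZ ff) //; ring.
move=> A leA x dA hx hc e e0; have c1 : 0 < `|c| + 1 by rewrite ltr_pwDr.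
have [a1 h1] := hf A leA x dA hx hc (e / (`|c| + 1)) (divr_gt0 e0 c1).
exists a1 => a aa; rewrite normrM; have := h1 a aa; rewrite ltr_pdivlMr // => h.
by apply: le_lt_trans h; rewrite mulrDr mulr1 mulrC lerDl.
Qed.

Lemma order_continuous_sum n (l : nat -> R) (f : nat -> (T -> R) -> R) :
  (forall i, (i < n)%N -> order_continuous P X (f i)) ->
  order_continuous P X (fun y => \sum_(i < n) l i * f i y).
Proof.
elim: n => [|n IH] hf; first by under eq_fun do rewrite big_ord0; exact: order_continuous0.
under eq_fun do rewrite big_ord_recr /=.
apply: order_continuousD; last exact/order_continuousZ/hf.
by apply: IH => i ilt; apply: hf; rewrite ltnS ltnW.
Qed.

Lemma directed_set_nat : directed_set (fun i j : nat => (i <= j)%N).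
Proof.
split => [|//|i j k|i j]; first by exists 0%N.
- exact: leq_trans.
- by exists (maxn i j); rewrite leq_maxl leq_maxr.
Qed.

Lemma order_continuous_decr_const phi (x : nat -> T -> R) a :
  order_continuous P X phi -> (forall m, X (x m)) ->
  (forall m m', (m <= m')%N -> ale P (x m') (x m)) ->
  (forall m, ale P (fun _ => 0) (x m)) ->
  (forall w, X w -> (forall m, ale P w (x m)) -> ale P w (fun _ => 0)) ->
  (forall m, phi (x m) = a) -> a = 0.
Proof.
move=> [_ oc] hx x_decr x_ge0 x_inf phix.
have x_cvg : order_conv0 P X (fun i j : nat => (i <= j)%N) x.
  exists nat, (fun i j : nat => (i <= j)%N), x; split.
    by split => //; exact: directed_set_nat.
  move=> b; exists b => m bm; apply: filterS2 (x_decr _ _ bm) (x_ge0 m) => t h1 h2.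
  by rewrite ger0_norm.
apply/eqP; rewrite -normr_le0; apply: (ler_add_pow2inv (b := 0) (K := 1)) => k.
have [m hm] := oc nat _ x directed_set_nat hx x_cvg _ (pow2inv_gt0 k).
by rewrite -(phix m) add0r mul1r ltW // hm.
Qed.

Definition supported (z : T -> R) (A : set T) := {ae P, forall t, ~ A t -> z t = 0}.

Definition annihilates (phi : (T -> R) -> R) (A : set T) :=
  forall z, X z -> ale P (fun _ => 0) z -> supported z A -> phi z = 0.

Definition max_annihilated (phi : (T -> R) -> R) (K : set T) :=
  [/\ measurable K, annihilates phi K &
      forall A, measurable A -> annihilates phi A -> P (A `\` K) = 0].

Definition restrict0 (A : set T) (z : T -> R) : T -> R := patch (fun=> 0) A z.

Lemma restrict0E A z t : restrict0 A z t = if t \in A then z t else 0.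
Proof. by []. Qed.

Lemma bfs_restrict z A : measurable A -> X z -> X (restrict0 A z).
Proof.
move=> mA hz; apply: (bfs_ideal _ hz).
  have -> : restrict0 A z = (fun t => z t * \1_A t).
    by apply: funext => t; rewrite restrict0E indicE; case: (_ \in A); rewrite ?mulr1 ?mulr0.
  exact: measurable_realfun.measurable_funM (bfs_measurable hz)
    (measurable_realfun.measurable_indic mA).
by apply: aeW => t; rewrite restrict0E; case: ifP; rewrite ?normr0.
Qed.

Lemma restrict_ae_ge0 z A : ale P (fun _ => 0) z -> ale P (fun _ => 0) (restrict0 A z).
Proof. by apply: filterS => t z0; rewrite restrict0E; case: ifP. Qed.

Lemma supported_restrict z A : supported (restrict0 A z) A.
Proof. by apply: aeW => t At; rewrite restrict0E memNset. Qed.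

Lemma restrict_splitC z A : z = (fun t => restrict0 A z t + restrict0 (~` A) z t).
Proof.
apply: funext => t; rewrite !restrict0E; case: (pselect (A t)) => At.
  by rewrite mem_set // memNset ?addr0.
by rewrite memNset // mem_set // add0r.
Qed.

Lemma le_restrict0 A B z t : A `<=` B -> 0 <= z t -> restrict0 A z t <= restrict0 B z t.
Proof.
move=> AB z0; rewrite !restrict0E; case: (pselect (A t)) => At.
  by rewrite !mem_set //; exact: AB.
by rewrite memNset //; case: ifP.
Qed.

Section Annihilation.
Variable phi : (T -> R) -> R.
Hypothesis fphi : functional_on P X phi.

Lemma annihilates0 : annihilates phi set0.
Proof.
move=> z hz _ sz; rewrite (lin_ae fphi hz bfs0) ?(lin0 fphi) //.
by move: sz; rewrite /supported; apply: filterS => t; apply.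
Qed.

Lemma annihilatesU A B : measurable A -> annihilates phi A -> annihilates phi B ->
  annihilates phi (A `|` B).
Proof.
move=> mA kA kB z hz z0 sz; have mCA := measurableC mA.
rewrite (restrict_splitC z A) (linD fphi (bfs_restrict mA hz) (bfs_restrict mCA hz)).
rewrite kA ?add0r; [|exact: bfs_restrict|exact: restrict_ae_ge0|exact: supported_restrict].
apply: kB; [exact: bfs_restrict|exact: restrict_ae_ge0|].
move: sz; rewrite /supported; apply: filterS => t zt Bt.
rewrite restrict0E; case: (pselect (A t)) => At.
  by rewrite memNset //= => /(_ At).
have zt0 : z t = 0 by apply: zt => -[/At|/Bt].
by rewrite zt0; case: ifP.
Qed.

End Annihilation.

Lemma annihilates_bigcup phi (A : nat -> set T) : order_continuous P X phi ->
  (forall n, measurable (A n)) -> (forall n, annihilates phi (A n)) ->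
  annihilates phi (\bigcup_n A n).
Proof.
move=> ocphi mA kA z hz z0 sz; have fphi := ocphi.1.
pose B m := \bigcup_(k < m) A k.
have BS m : B m.+1 = B m `|` A m by rewrite /B !bigcup_mkord big_ord_recr.
have mB m : measurable (B m) by rewrite /B bigcup_mkord; exact: bigsetU_measurable.
have kB m : annihilates phi (B m).
  elim: m => [|m IH]; last by rewrite BS; apply: annihilatesU.
  by rewrite /B bigcup_mkord big_ord0; exact: annihilates0.
pose x m := restrict0 (~` B m) z.
apply: (order_continuous_decr_const (x := x) ocphi).
- by move=> m; apply/bfs_restrict/hz/measurableC.
- move=> m m' mm'; apply: filterS z0 => t zt; apply: le_restrict0 => // s nB'.
  by move=> [k km Ak]; apply: nB'; exists k => //=; apply: leq_trans mm'.
- by move=> m; apply: restrict_ae_ge0.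
- move=> w hw /ae_foralln w_le; move: sz; rewrite /supported => sz.
  apply: filterS2 w_le sz => t wt zt; case: (pselect ((\bigcup_n A n) t)) => [[n _ An]|nA].
    have Bt : B n.+1 t by exists n => //=.
    by apply: le_trans (wt n.+1) _; rewrite /x restrict0E memNset //= => /(_ Bt).
  by apply: le_trans (wt 0%N) _; rewrite /x restrict0E zt //; case: ifP.
- move=> m; rewrite [in RHS](restrict_splitC z (B m)).
  rewrite (linD fphi (bfs_restrict (mB m) hz) (bfs_restrict (measurableC (mB m)) hz)).
  have hBz := bfs_restrict (mB m) hz.
  by rewrite (kB m _ hBz (restrict_ae_ge0 _ z0) (supported_restrict _ _)) add0r.
Qed.

(* [phi] kills every [min u (k z)], and these increase to [u] where [z > 0]. *)
Lemma annihilates_pos phi z : order_continuous P X phi -> positive_functional phi -> X z ->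
  ale P (fun _ => 0) z -> phi z = 0 -> annihilates phi [set t | 0 < z t].
Proof.
move=> ocphi pphi hz z0 phiz u hu u0 su; have fphi := ocphi.1.
pose v (k : nat) t := Num.min (u t) (k%:R * z t).
have hkz k : X (fun t => k%:R * z t) by apply: bfsZ.
have hv k : X (v k).
  apply: (bfs_ideal _ hu).
    exact: measurable_realfun.measurable_minr (bfs_measurable hu) (bfs_measurable (hkz k)).
  apply: filterS2 u0 z0 => t ut zt.
  by rewrite !ger0_norm ?le_min ?ut ?mulr_ge0 //= ge_min lexx.
have phiv k : phi (v k) = 0.
  apply/eqP; rewrite eq_le; apply/andP; split.
    rewrite -(mulr0 k%:R) -phiz -(linZ fphi) //.
    by apply: (positive_le fphi pphi) => //; apply: aeW => t; rewrite ge_min lexx orbT.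
  by apply: pphi => //; apply: filterS2 u0 z0 => t ut zt; rewrite le_min ut mulr_ge0.
apply: (order_continuous_decr_const (x := fun k t => u t - v k t) ocphi).
- by move=> k; apply: bfsB.
- move=> k k' kk'; apply: filterS z0 => t zt; rewrite lerD2l lerN2 le_min !ge_min lexx /=.
  by rewrite ler_wpM2r ?ler_nat ?orbT.
- by move=> k; apply: aeW => t; rewrite subr_ge0 ge_min lexx.
- move=> w hw /ae_foralln w_le; move: su; rewrite /supported => su.
  apply: filterS3 w_le su z0 => t wt ut zt; case: (ltP 0 (z t)) => [zt_gt0|zt_le0].
    have := archi_boundP (normr_ge0 (u t / z t)); set B := Num.Def.archi_bound _ => hB.
    apply: le_trans (wt B) _; rewrite /v (min_idPl _) ?subrr //.
    by rewrite -ler_pdivrMr //; apply: le_trans (ltW hB); exact: ler_norm.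
  have ut0 : u t = 0 by apply: ut; apply/negP; rewrite -leNgt.
  by apply: le_trans (wt 0%N) _; rewrite /v ut0 mul0r minxx subrr.
- by move=> k; rewrite (linB fphi) // phiv subr0.
Qed.

(* The complement of the carrier of [phi]: a countable union of annihilated
   sets of almost maximal probability. *)
Lemma exists_max_annihilated phi : order_continuous P X phi ->
  exists K, max_annihilated phi K.
Proof.
move=> ocphi; have fphi := ocphi.1.
pose S := [set prob P A | A in [set A | measurable A /\ annihilates phi A]].
have S0 : S !=set0 by exists (prob P set0), set0 => //; split => //; exact: annihilates0.
have S_ub : has_ubound S by exists 1 => _ [A [mA _] <-]; exact: prob_le1.
have /choice [A hA] n : exists A, (measurable A /\ annihilates phi A) /\
    sup S - pow2inv n < prob P A.
  have : sup S - pow2inv n < sup S by rewrite ltrBlDr ltrDl pow2inv_gt0.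
  by move=> /(sup_gt S0) [_ [A hA <-] h]; exists A.
have mA n : measurable (A n) by case: (hA n) => -[].
pose K := \bigcup_n A n.
have mK : measurable K by exact: bigcupT_measurable.
have kK : annihilates phi K by apply: annihilates_bigcup => // n; case: (hA n) => -[].
have probK : prob P K = sup S.
  apply/eqP; rewrite eq_le; apply/andP; split; first by apply: ub_le_sup => //; exists K.
  apply: (ler_add_pow2inv (K := 1)) => n; rewrite mul1r -lerBlDr; apply: ltW.
  case: (hA n) => _ /lt_le_trans; apply; apply: le_prob => // t An.
  by exists n.
exists K; split => // B mB kB; apply: prob_eq0; first exact: measurableD.
have : prob P (K `|` B) <= sup S.
  apply: ub_le_sup => //; exists (K `|` B) => //.
  by split; [exact: measurableU | exact: annihilatesU].
have -> : K `|` B = K `|` (B `\` K) by rewrite setDE setUIr setUCr setIT.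
rewrite probU //; last 2 first.
- exact: measurableD.
- by apply/seteqP; split => t // [Kt [_ nKt]].
rewrite probK; have := prob_ge0 P (B `\` K); lra.
Qed.

Lemma annihilates_le f g A (c : R) : 0 < c -> positive_functional f ->
  (forall y, X y -> ale P (fun _ => 0) y -> c * f y <= g y) ->
  annihilates g A -> annihilates f A.
Proof.
move=> c0 pf fg kg z hz z0 sz; apply/eqP; rewrite eq_le pf // andbT.
by rewrite -(pmulr_rle0 _ c0) -(kg z hz z0 sz) fg.
Qed.

Lemma measurable_gt0 (y : T -> R) : measurable_fun setT y -> measurable [set t | 0 < y t].
Proof.
move=> my; have := my measurableT _ (measurable_itv `]0, +oo[); rewrite setTI.
by congr measurable; apply/seteqP; split => t /=; rewrite in_itv /= andbT.
Qed.

Lemma supported_of_null y K K' : measurable_fun setT y -> measurable K -> measurable K' ->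
  ale P (fun _ => 0) y -> P ([set t | 0 < y t] `\` K) = 0 -> P (K `\` K') = 0 ->
  supported y K'.
Proof.
move=> my mK mK' y0 yK KK'; have mZ := measurable_gt0 my.
have := negligible_ae (measurableD mZ mK) yK (fun t (h : ~ ([set t | 0 < y t] `\` K) t) => h).
have := negligible_ae (measurableD mK mK') KK' (fun t (h : ~ (K `\` K') t) => h).
move=> h2 h1; apply: filterS3 y0 h1 h2 => t yt h1t h2t nK't.
apply/eqP; rewrite eq_le yt andbT leNgt; apply/negP => yt_gt0.
by apply: h1t; split => // Kt; apply: h2t.
Qed.

Section Series.
Variables (psi : nat -> (T -> R) -> R) (c : nat -> R).
Hypotheses (psi_oc : forall n, order_continuous P X (psi n))
  (psi_small : forall n y, X y -> `|c n * psi n y| <= pow2inv n * N y).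

Definition partial_sum y l := \sum_(k < l) c k * psi k y.

Definition series y := dyadic_lim (partial_sum y) (N y).

Lemma series_approx y l : X y -> `|series y - partial_sum y l| <= 2 * N y * pow2inv l.
Proof.
move=> hy; apply: dyadic_limP => [|k]; first exact: bnorm_ge0.
by rewrite /partial_sum big_ord_recr /= addrAC subrr add0r [X in _ <= X]mulrC psi_small.
Qed.

Lemma series_functional : functional_on P X series.
Proof.
have psi_lin k := (psi_oc k).1.
split.
- move=> y z hy hz yz; rewrite /series (bnorm_ae hy hz yz); congr dyadic_lim.
  by apply: funext => l; apply: eq_bigr => k _; rewrite (lin_ae (psi_lin k) hy hz yz).
- move=> y z hy hz; have hyz := bfsD hy hz.
  have SD l : partial_sum (fun t => y t + z t) l = partial_sum y l + partial_sum z l.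
    rewrite /partial_sum -big_split; apply: eq_bigr => k _.
    by rewrite (linD (psi_lin k)) // mulrDr.
  apply/eqP; rewrite -subr_eq0 -normr_le0.
  apply: (ler_add_pow2inv (b := 0) (K := 2 * (N (fun t => y t + z t) + N y + N z))) => l.
  have := series_approx l hyz; have := series_approx l hy; have := series_approx l hz.
  rewrite SD add0r !ler_norml => /andP [? ?] /andP [? ?] /andP [? ?].
  by apply/andP; split; lra.
- move=> a y hy; have hay := bfsZ a hy.
  have SZ l : partial_sum (fun t => a * y t) l = a * partial_sum y l.
    rewrite /partial_sum mulr_sumr; apply: eq_bigr => k _.
    by rewrite (linZ (psi_lin k)) // mulrCA.
  apply/eqP; rewrite -subr_eq0 -normr_le0.
  apply: (ler_add_pow2inv (b := 0) (K := 2 * (N (fun t => a * y t) + `|a| * N y))) => l.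
  have := ler_wpM2l (normr_ge0 a) (series_approx l hy); rewrite -normrM mulrBr.
  have := series_approx l hay; rewrite SZ add0r !ler_norml => /andP [? ?] /andP [? ?].
  by apply/andP; split; lra.
Qed.

(* Eventually [x a] is dominated by some [z b], which bounds the tail of the
   series uniformly; the partial sums are order continuous. *)
Lemma series_order_continuous : order_continuous P X series.
Proof.
split; first exact: series_functional.
move=> A leA x dA hx x_cvg e e0; have e2 : 0 < e / 2 by rewrite divr_gt0.
have [B [leB [z [[dB hz _ z0 _] x_le]]]] := x_cvg; have [[b0 _] _ _ _] := dB.
have [a1 ha1] := x_le b0; have [l hl] := pow2inv_small (2 * N (z b0)) e2.
have [_ S_oc] := order_continuous_sum c (fun i _ => psi_oc i) (n := l).
have [a2 ha2] := S_oc A leA x dA hx x_cvg _ e2.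
have [_ _ le_trans_A dirA] := dA; have [k [k1 k2]] := dirA a1 a2.
exists k => a ka; have Nxa : N (x a) <= N (z b0).
  apply: bnorm_le => //; apply: filterS2 (ha1 a (le_trans_A _ _ _ k1 ka)) (z0 b0) => t h1 h2.
  by rewrite (ger0_norm h2).
rewrite -(subrK (partial_sum (x a) l) (series (x a))) (splitr e).
apply: le_lt_trans (ler_normD _ _) (ltrD _ (ha2 a (le_trans_A _ _ _ k2 ka))).
apply: le_lt_trans (series_approx l (hx a)) (le_lt_trans _ hl).
by rewrite ler_wpM2r ?pow2inv_ge0 // ler_pM2l.
Qed.

Hypothesis c_ge0 : forall n, 0 <= c n.

Lemma partial_le_series y l : X y -> (forall k, 0 <= psi k y) -> partial_sum y l <= series y.
Proof.
move=> hy psi_ge0; have S_incr : nondecreasing_seq (partial_sum y).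
  by apply/nondecreasing_seqP => m; rewrite /partial_sum big_ord_recr lerDl mulr_ge0.
apply: (ler_add_pow2inv (K := 2 * N y)) => m.
have := series_approx (maxn l m) hy; rewrite ler_norml => /andP [h _].
have := S_incr _ _ (leq_maxl l m); have := pow2inv_le (R := R) (leq_maxr l m).
have := bnorm_ge0 hy; nra.
Qed.

Lemma series_le0 y : X y -> (forall k, psi k y <= 0) -> series y <= 0.
Proof.
move=> hy psi_le0; apply: (ler_add_pow2inv (b := 0) (K := 2 * N y)) => l.
have : partial_sum y l <= 0 by apply: sumr_le0 => k _; rewrite mulr_ge0_le0.
by have := series_approx l hy; rewrite ler_norml add0r => /andP [_ ?]; lra.
Qed.

End Series.

Section Cone.
Variable C : set (T -> R).
Hypotheses (wC : weakly_closed P X C) (cC : is_cone X C) (C0 : C (fun _ => 0)).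

Lemma weak_separation z : X z -> ~ C z -> exists phi, [/\ order_continuous P X phi,
  (forall c, C c -> phi c <= 0) & 0 < phi z].
Proof.
move=> hz nCz; have [CX [CD CZ]] := cC.
case: wC => _ /(_ z hz nCz) [s [e [s_oc [e0 far]]]].
pose f i := nth (fun _ => 0) s i; pose n := size s.
have f_oc i : order_continuous P X (f i).
  case: (ltnP i n) => [ilt|ige]; first by apply/s_oc/mem_nth.
  by rewrite /f nth_default //; exact: order_continuous0.
have fD i c c' : C c -> C c' -> f i (fun t => c t + c' t) = f i c + f i c'.
  by move=> /CX hc /CX hc'; rewrite (linD (f_oc i).1).
have fZ i a c : C c -> f i (fun t => a * c t) = a * f i c.
  by move=> /CX hc; rewrite (linZ (f_oc i).1).
pose D := [set (fun i => f i c) | c in C].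
have [l [l_le0 l_gt0]] : exists l, (forall u, D u -> dotn n l u <= 0) /\
    0 < dotn n l (fun i => f i z).
  apply: (@cone_separation _ n D (fun i => f i z) e e0).
  - by exists (fun _ => 0) => //; apply: funext => i; rewrite (lin0 (f_oc i).1).
  - move=> _ _ [c hc <-] [c' hc' <-]; exists (fun t => c t + c' t); first exact: CD.
    by apply: funext => i; rewrite fD.
  - move=> a _ a0 [c hc <-]; exists (fun t => a * c t); first exact: CZ.
    by apply: funext => i; rewrite fZ.
  move=> _ [c hc <-]; rewrite leNgt; apply/negP => near; apply: (far c (CX _ hc)) => // phi.
  move=> /(nthP (fun _ => 0)) [i ilt <-]; rewrite distrC.
  by apply: le_lt_trans near; exact: (ler_maxnorm (fun i => f i z - f i c) ilt).
exists (fun y => \sum_(i < n) l i * f i y); split => //; first exact: order_continuous_sum.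
by move=> c hc; apply: (l_le0 (fun i => f i c)); exists c.
Qed.

Definition admissible phi :=
  [/\ order_continuous P X phi, positive_functional phi & forall c, C c -> phi c <= 0].

Lemma admissibleD f g : admissible f -> admissible g -> admissible (fun y => f y + g y).
Proof.
move=> [ocf pf Cf] [ocg pg Cg]; split; first exact: order_continuousD.
  by move=> y hy y0; rewrite addr_ge0 ?pf ?pg.
by move=> c hc; have := Cf c hc; have := Cg c hc; lra.
Qed.

Lemma admissible_series (psi : nat -> (T -> R) -> R) : (forall n, admissible (psi n)) ->
  exists f, admissible f /\ forall n, exists2 c, 0 < c &
    forall y, X y -> ale P (fun _ => 0) y -> c * psi n y <= f y.
Proof.
move=> psi_adm; have psi_oc n : order_continuous P X (psi n) by case: (psi_adm n).
have psi_pos n : positive_functional (psi n) by case: (psi_adm n).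
have /choice [M hM] n : exists M, 0 <= M /\ forall y, X y -> `|psi n y| <= M * N y.
  exact: positive_bounded (psi_oc n).1 (psi_pos n).
pose c n := pow2inv n / (1 + M n).
have M1_gt0 n : 0 < 1 + M n by case: (hM n) => M0 _; rewrite ltr_pwDl.
have c_gt0 n : 0 < c n by rewrite divr_gt0 ?pow2inv_gt0.
have psi_small n y : X y -> `|c n * psi n y| <= pow2inv n * N y.
  move=> hy; have [M0 psiM] := hM n; rewrite normrM (ger0_norm (ltW (c_gt0 n))).
  apply: le_trans (ler_wpM2l (ltW (c_gt0 n)) (psiM y hy)) _.
  rewrite mulrA ler_wpM2r ?bnorm_ge0 //.
  by rewrite /c mulrAC ler_pdivrMr // ler_wpM2l ?pow2inv_ge0 // lerDr.
have c_ge0 n : 0 <= c n by exact: ltW.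
have S_le y l : X y -> ale P (fun _ => 0) y -> partial_sum psi c y l <= series psi c y.
  by move=> hy y0; apply: partial_le_series => // k; apply: psi_pos.
exists (series psi c); split; first split.
- exact: series_order_continuous.
- by move=> y hy y0; apply: le_trans (S_le y 0%N hy y0); rewrite /partial_sum big_ord0.
- move=> y hy; apply: series_le0 => // [|k]; first exact: (proj1 cC).
  by case: (psi_adm k) => _ _; apply.
move=> n; exists (c n) => // y hy y0; apply: le_trans (S_le y n.+1 hy y0).
rewrite /partial_sum big_ord_recr /= lerDr sumr_ge0 // => k _.
by rewrite mulr_ge0 ?psi_pos.
Qed.

Lemma admissible0 : admissible (fun _ => 0).
Proof. by split => //; exact: order_continuous0. Qed.

(* Exhaustion: combining admissible functionals whose maximal annihilated sets
   have probabilities tending to the infimum yields one attaining it. *)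
Lemma exists_admissible_min_annihilated : exists f K,
  [/\ admissible f, max_annihilated f K &
      forall g K', admissible g -> max_annihilated g K' -> prob P K <= prob P K'].
Proof.
pose S := [set prob P K | K in [set K | exists g, admissible g /\ max_annihilated g K]].
have S0 : S !=set0.
  exists (prob P setT), setT => //; exists (fun _ => 0); split; first exact: admissible0.
  by split => // A _ _; rewrite setDT measure0.
have S_lb : has_lbound S by exists 0 => _ [K _ <-]; exact: prob_ge0.
have /choice [Kg hKg] n : exists Kg : set T * ((T -> R) -> R),
    [/\ admissible Kg.2, max_annihilated Kg.2 Kg.1 & prob P Kg.1 < inf S + pow2inv n].
  have : inf S < inf S + pow2inv n by rewrite ltrDl pow2inv_gt0.
  by move=> /(inf_lt S0) [_ [K [g [g_adm gK]] <-] h]; exists (K, g).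
have Kg_adm n : admissible (Kg n).2 by case: (hKg n).
have [f [f_adm f_dom]] := admissible_series (psi := fun n => (Kg n).2) Kg_adm.
have [K [mK kK maxK]] : exists K, max_annihilated f K.
  by case: f_adm => f_oc _ _; exact: exists_max_annihilated f_oc.
exists f, K; split => // g K' g_adm gK'.
apply: (@le_trans _ _ (inf S)); last by apply: ge_inf => //; exists K' => //; exists g.
apply: (ler_add_pow2inv (K := 1)) => n; rewrite mul1r; apply: ltW.
have [[_ psi_pos _] [mKn _ maxKn] lt_n] := hKg n; apply: le_lt_trans lt_n.
have [c c_gt0 dom] := f_dom n.
apply: prob_le_of_null_setD => //; apply: maxKn => //.
exact: annihilates_le c_gt0 psi_pos dom kK.
Qed.

Lemma admissible_of_separating phi : order_continuous P X phi ->
  (forall c, C c -> phi c <= 0) ->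
  (forall x, X x -> ale P (fun _ => 0) x -> C (fun t => - x t)) -> admissible phi.
Proof.
move=> ocphi phiC negC; split => // y hy y0.
by rewrite -oppr_le0 -(linN ocphi.1) //; apply/phiC/negC.
Qed.

Theorem exists_strictly_positive_admissible :
  (forall x, X x -> ale P (fun _ => 0) x -> C (fun t => - x t)) ->
  (forall x, C x -> ale P (fun _ => 0) x -> aeq P x (fun _ => 0)) ->
  exists phi, admissible phi /\ strictly_positive P X phi.
Proof.
move=> negC posC; have [f [K [f_adm [mK kK maxK] K_min]]] := exists_admissible_min_annihilated.
exists f; split => // y hy y0 y_ne0; have [f_oc f_pos _] := f_adm.
rewrite lt_neqAle f_pos // andbT; apply/negP => /eqP /esym fy0.
have yK := maxK _ (measurable_gt0 (bfs_measurable hy)) (annihilates_pos f_oc f_pos hy y0 fy0).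
have [psi [psi_oc psi_C psi_y]] := weak_separation hy (fun Cy => y_ne0 (posC _ Cy y0)).
have psi_adm := admissible_of_separating psi_oc psi_C negC.
have fpsi_adm := admissibleD f_adm psi_adm; have [fpsi_oc _ _] := fpsi_adm.
have [K' hK'] := exists_max_annihilated fpsi_oc; have [mK' kK' _] := hK'.
have [_ psi_pos _] := psi_adm.
have f_le z : X z -> ale P (fun _ => 0) z -> 1 * f z <= f z + psi z.
  by move=> hz z0; rewrite mul1r lerDl psi_pos.
have psi_le z : X z -> ale P (fun _ => 0) z -> 1 * psi z <= f z + psi z.
  by move=> hz z0; rewrite mul1r lerDr f_pos.
have K'K := maxK _ mK' (annihilates_le ltr01 f_pos f_le kK').
have KK' := null_setD_of_prob_le mK mK' K'K (K_min _ _ fpsi_adm hK').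
have y_supp := supported_of_null (bfs_measurable hy) mK mK' y0 yK KK'.
by have := annihilates_le ltr01 psi_pos psi_le kK' hy y0 y_supp; lra.
Qed.

End Cone.

End BanachFunctionSpace.

Unset Implicit Arguments.

Theorem proposition3p5 (d : measure_display) (T : measurableType d) (R : realType)
    (P : probability T R) (X : set (T -> R)) (N : (T -> R) -> R) :
  banach_function_space P X N ->
  forall C : set (T -> R),
    weakly_closed P X C -> is_cone X C ->
    (forall x, X x -> ale P (fun _ => 0) x -> C (fun t => - x t)) ->
    (forall x, C x -> ale P (fun _ => 0) x -> aeq P x (fun _ => 0)) ->
    exists phi : (T -> R) -> R,
      order_continuous P X phi /\ strictly_positive P X phi /\
      (forall x, C x -> phi x <= 0).
Proof.
move=> hX C wC cC negC posC.
have C0 : C (fun _ => 0).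
  by have := negC _ (bfs0 hX) (aeW _ (fun t => lexx 0)); under eq_fun do rewrite oppr0.
have [phi [[phi_oc _ phi_C] phi_pos]] :=
  exists_strictly_positive_admissible hX wC cC C0 negC posC.
by exists phi.
Qed.
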